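(* Every finite nonempty inverse semigroup is $K$-thin.
   Context: An inverse semigroup is a semigroup in which every element $x$ has a unique $y$ with $xyx=x$ and $yxy=y$. For a finite nonempty semigroup $S$, the minimal ideal $K(S)$ is the intersection of all nonempty two-sided ideals of $S$. A Rees matrix semigroup $\mathcal{M}(H;I,J;p)$, for sets $I,J$, a group $H$ and a function $p\colon J\times I\to H$, is the set $I\times H\times J$ with product $(i,h,j)(i',h',j')=(i,h\,p(j,i')\,h',j')$. It is known that $K(S)$ is always isomorphic to such a Rees matrix semigroup with $H$ a finite group and $p$ normalized (i.e. $p(j_0,i)=e_H$ and $p(j,i_0)=e_H$ for some fixed $i_0\in I$, $j_0\in J$ and all $i,j$). $S$ is called $K$-thin if $K(S)$ has such a normalized Rees matrix structure with $|I|=1$ or $|J|=1$; equivalently, $K(S)$ is left-simple or right-simple. *)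

From mathcomp Require Import all_boot all_fingroup.
Set Implicit Arguments. Unset Strict Implicit. Unset Printing Implicit Defensive.

(* A finite semigroup is a finType S with an associative binary operation mul. *)

Definition inverse_semigroup (S : Type) (mul : S -> S -> S) : Prop :=
  forall x : S, exists! y : S, mul (mul x y) x = x /\ mul (mul y x) y = y.

Definition ideal (S : finType) (mul : S -> S -> S) (A : {set S}) : bool :=
  (A != set0) &&
  [forall a in A, forall s : S, (mul s a \in A) && (mul a s \in A)].

Definition minimal_ideal (S : finType) (mul : S -> S -> S) : {set S} :=
  \bigcap_(A : {set S} | ideal mul A) A.

Definition rees_mul (I J : Type) (H : finGroupType) (p : J -> I -> H)
  (x y : I * H * J) : I * H * J :=
  let: (i, h, j) := x in let: (i', h', j') := y in
  (i, (h * p j i' * h')%g, j').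

(* K(S) is isomorphic to a normalized Rees matrix semigroup M(H; I, J; p)
   over a finite group H with |I| = 1 or |J| = 1.  The isomorphism is given
   as an injective map phi from I * H * J onto K(S) that is multiplicative. *)
Definition K_thin (S : finType) (mul : S -> S -> S) : Prop :=
  exists (I J : finType) (H : finGroupType) (p : J -> I -> H) (i0 : I) (j0 : J),
    [/\ (forall i : I, p j0 i = 1%g),
        (forall j : J, p j i0 = 1%g),
        (#|I| = 1 \/ #|J| = 1) &
        exists phi : I * H * J -> S,
          [/\ injective phi,
              (forall s : S, s \in minimal_ideal mul <-> exists x, phi x = s) &
              (forall x y, phi (rees_mul p x y) = mul (phi x) (phi y))]].

From HB Require Import structures.
From mathcomp Require Import all_boot all_fingroup.
Set Implicit Arguments. Unset Strict Implicit. Unset Printing Implicit Defensive.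

(* Idempotents of an inverse semigroup commute.  If g <= e are idempotents
   with e in the minimal ideal K, write e = x g y; then a = e x g satisfies
   a a^-1 = e and a^-1 a <= g, and since in the finite monoid e S e one-sided
   inverses are two-sided, g = e.  So K has a single idempotent e, and
   k k^-1 = k^-1 k = e for all k in K: K is a group H, and K is isomorphic
   to the Rees matrix semigroup M(H; 1, 1; 1). *)

Section Ideals.
Variables (S : finType) (mul : S -> S -> S).
Local Notation "x ** y" := (mul x y) (at level 40, left associativity).
Local Notation K := (minimal_ideal mul).

Lemma idealP (A : {set S}) :
  reflect (A != set0 /\ forall a s, a \in A -> s ** a \in A /\ a ** s \in A)
          (ideal mul A).
Proof.
apply: (iffP andP) => -[-> closedA]; split=> //.
  by move=> a s aA; move/forall_inP/(_ a aA)/forallP/(_ s)/andP: closedA.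
by apply/forall_inP => a aA; apply/forallP => s; have [-> ->] := closedA a s aA.
Qed.

Lemma minimal_ideal_mull s a : a \in K -> s ** a \in K.
Proof.
by move=> /bigcapP aK; apply/bigcapP => A /[dup] /aK aA /idealP[_ /(_ a s aA)[]].
Qed.

Lemma minimal_ideal_mulr a s : a \in K -> a ** s \in K.
Proof.
by move=> /bigcapP aK; apply/bigcapP => A /[dup] /aK aA /idealP[_ /(_ a s aA)[]].
Qed.

Lemma idealI (A B : {set S}) : ideal mul A -> ideal mul B -> ideal mul (A :&: B).
Proof.
move=> /idealP[/set0Pn[a aA] closedA] /idealP[/set0Pn[b bB] closedB].
apply/idealP; split=> [|c s /setIP[cA cB]].
  by apply/set0Pn; exists (a ** b); rewrite inE (closedA a b aA).2 (closedB b a bB).1.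
have [? ?] := closedA c s cA; have [? ?] := closedB c s cB.
by rewrite !inE; split; apply/andP.
Qed.

Hypothesis S_gt0 : 0 < #|S|.

Lemma minimal_ideal_neq0 : K != set0.
Proof.
have idealT : ideal mul setT.
  apply/idealP; split=> [|a s _]; last by rewrite !inE.
  by case/card_gt0P: S_gt0 => x _; apply/set0Pn; exists x; rewrite inE.
have [M idealM minM] := arg_minnP (fun A : {set S} => #|A|) idealT.
have MK : M \subset K.
  apply/bigcapsP => A /(idealI idealM) idealMA.
  have /eqP <- : M :&: A == M by rewrite eqEcard subsetIl minM.
  exact: subsetIr.
by case/idealP: idealM => /set0Pn[m mM] _; apply/set0Pn; exists m; apply: (subsetP MK).
Qed.

Hypothesis mulA : associative mul.

Lemma minimal_ideal_sub_principal k j : j \in K -> exists x y, j = x ** k ** y.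
Proof.
pose SkS := [set j | [exists x, exists y, j == x ** k ** y]].
have idealSkS : ideal mul SkS.
  apply/idealP; split.
    case/card_gt0P: S_gt0 => x _; apply/set0Pn; exists (x ** k ** x).
    by rewrite inE; apply/existsP; exists x; apply/existsP; exists x.
  move=> i s; rewrite inE => /existsP[x /existsP[y /eqP ->]].
  rewrite !inE; split; apply/existsP.
    by exists (s ** x); apply/existsP; exists y; rewrite !mulA.
  by exists x; apply/existsP; exists (y ** s); rewrite !mulA.
move=> /(subsetP (bigcap_inf _ idealSkS)).
by rewrite inE => /existsP[x /existsP[y /eqP ->]]; exists x, y.
Qed.

End Ideals.

Section LocalMonoid.
Variables (S : finType) (mul : S -> S -> S).
Hypothesis mulA : associative mul.
Local Notation "x ** y" := (mul x y) (at level 40, left associativity).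

(* Dedekind-finiteness of the finite monoid e S e: as a b = e, left
   multiplication by b is injective on e S, hence onto it, so e = b y and
   b a = b a b y = b y = e. *)
Lemma local_monoid_rinv_linv e a b :
  e ** e = e -> a ** e = a -> e ** b = b -> b ** e = b -> a ** b = e -> b ** a = e.
Proof.
move=> ee ae eb be ab.
pose T := [set x | e ** x == x].
have bT : [set b ** x | x in T] \subset T.
  by apply/subsetP => _ /imsetP[x _ ->]; rewrite inE mulA eb.
have b_inj : {in T &, injective (mul b)}.
  by move=> x y; rewrite !inE => /eqP ex /eqP ey bxy; rewrite -ex -ey -ab -!mulA bxy.
have /eqP bT_eq : [set b ** x | x in T] == T.
  by rewrite eqEcard bT (card_in_imset b_inj) leqnn.
have : e \in T by rewrite inE ee.
rewrite -bT_eq => /imsetP[y _ e_by].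
have -> : b ** a = b ** a ** e by rewrite -mulA ae.
by rewrite [in LHS]e_by mulA -(mulA b a b) ab be.
Qed.

End LocalMonoid.

Section InverseSemigroup.
Variables (S : finType) (mul : S -> S -> S).
Hypotheses (mulA : associative mul) (invS : inverse_semigroup mul).
Local Notation "x ** y" := (mul x y) (at level 40, left associativity).

Definition sinv x := odflt x [pick y | (x ** y ** x == x) && (y ** x ** y == y)].

Lemma sinvP x : x ** sinv x ** x = x /\ sinv x ** x ** sinv x = sinv x.
Proof.
rewrite /sinv; case: pickP => [y /andP[/eqP-> /eqP->] // | no_inv].
by have [y [[xyx yxy] _]] := invS x; have := no_inv y; rewrite xyx yxy !eqxx.
Qed.

Lemma sinv_uniq x y : x ** y ** x = x -> y ** x ** y = y -> y = sinv x.
Proof.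
have [z [_ z_uniq]] := invS x => xyx yxy.
by rewrite -(z_uniq y) ?(z_uniq (sinv x)) //; apply: sinvP.
Qed.

Lemma idem_mul e f : e ** e = e -> f ** f = f -> e ** f ** (e ** f) = e ** f.
Proof.
move=> ee ff; pose x := sinv (e ** f); have [efx xefx] := sinvP (e ** f).
rewrite -/x !mulA in efx xefx.
have ee' a : a ** e ** e = a ** e by rewrite -mulA ee.
have ff' a : a ** f ** f = a ** f by rewrite -mulA ff.
have xefx' a : a ** x ** e ** f ** x = a ** x.
  by move: (congr1 (mul a) xefx); rewrite !mulA.
have fxe_x : f ** x ** e = x.
  by apply: sinv_uniq; rewrite !mulA ?ff' ?ee' ?efx ?xefx'.
have xx : x ** x = x by rewrite -{1 2}fxe_x !mulA xefx' fxe_x.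
have -> : e ** f = x.
  rewrite [RHS](sinv_uniq (x := x) (y := x)) ?xx //.
  by apply: sinv_uniq; rewrite !mulA.
by rewrite xx.
Qed.

Lemma idem_comm e f : e ** e = e -> f ** f = f -> e ** f = f ** e.
Proof.
move=> ee ff; have efef := idem_mul ee ff; have fefe := idem_mul ff ee.
rewrite -!mulA in efef fefe.
have <- : sinv (e ** f) = e ** f by apply: esym; apply: sinv_uniq; rewrite -!mulA !efef.
by apply: esym; apply: sinv_uniq; rewrite -!mulA ?(mulA f f) ?(mulA e e) ?ff ?ee ?efef ?fefe.
Qed.

Hypothesis S_gt0 : 0 < #|S|.
Local Notation K := (minimal_ideal mul).

Lemma minimal_ideal_idem_primitive e g :
  e \in K -> e ** e = e -> g ** g = g -> g ** e = g -> g = e.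
Proof.
move=> eK ee gg ge; have eg : e ** g = g by rewrite idem_comm.
have [x [y e_xgy]] := minimal_ideal_sub_principal S_gt0 mulA g eK.
pose a := e ** x ** g; pose c := sinv a.
have [aca cac] : a ** c ** a = a /\ c ** a ** c = c := sinvP a.
have ag : a ** g = a by rewrite -mulA gg.
have ae : a ** e = a by rewrite -mulA ge.
have ea : e ** a = a by rewrite !mulA ee.
have ca_idem : c ** a ** (c ** a) = c ** a by rewrite mulA cac.
have ac_idem : a ** c ** (a ** c) = a ** c by rewrite mulA aca.
have gca : g ** (c ** a) = c ** a by rewrite idem_comm // -mulA ag.
have eca : e ** (c ** a) = c ** a by rewrite -gca mulA eg.
have a_gen : a ** (g ** y ** e) = e.
  transitivity (e ** (x ** g ** y) ** e); last by rewrite -e_xgy !ee.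
  by rewrite /a !mulA -(mulA _ g g) gg.
have ac_e : a ** c = e.
  have eac : e ** (a ** c) = a ** c by rewrite mulA ea.
  have ace : a ** c ** e = e by rewrite -[in LHS]a_gen mulA aca a_gen.
  by rewrite -eac idem_comm // ace.
have ca_e : c ** a = e.
  apply: (local_monoid_rinv_linv mulA ee ae _ _ ac_e).
    by rewrite -cac mulA eca.
  by rewrite -ac_e mulA cac.
by rewrite -ge -ca_e gca.
Qed.

Lemma minimal_ideal_idem_uniq e f :
  e \in K -> f \in K -> e ** e = e -> f ** f = f -> e = f.
Proof.
move=> eK fK ee ff; have efef := idem_mul ee ff.
have efe : e ** f ** e = e ** f by rewrite idem_comm // mulA ee.
have eff : e ** f ** f = e ** f by rewrite -mulA ff.
by rewrite -(minimal_ideal_idem_primitive eK ee efef efe)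
           (minimal_ideal_idem_primitive fK ff efef eff).
Qed.

Lemma minimal_ideal_sinv k : k \in K -> sinv k \in K.
Proof.
move=> kK; have [_ <-] := sinvP k.
by apply: minimal_ideal_mulr; apply: minimal_ideal_mull.
Qed.

Lemma minimal_ideal_mul_sinv k l : k \in K -> l \in K -> k ** sinv k = l ** sinv l.
Proof.
move=> kK lK; have [kk' _] := sinvP k; have [ll' _] := sinvP l.
by apply: minimal_ideal_idem_uniq; rewrite ?mulA ?kk' ?ll' // minimal_ideal_mulr.
Qed.

Lemma minimal_ideal_sinv_mul k l : k \in K -> l \in K -> sinv k ** k = l ** sinv l.
Proof.
move=> kK lK; have [_ k'k] := sinvP k; have [ll' _] := sinvP l.
apply: minimal_ideal_idem_uniq; rewrite ?mulA ?k'k ?ll' //.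
  exact: minimal_ideal_mull.
exact: minimal_ideal_mulr.
Qed.

Inductive minimal_ideal_group : predArgType := MinimalIdealElt k of k \in K.
Definition minimal_ideal_val u := let: MinimalIdealElt k _ := u in k.
Definition minimal_ideal_group_Sub := Eval hnf in [isSub for minimal_ideal_val].
HB.instance Definition _ := minimal_ideal_group_Sub.
#[hnf] HB.instance Definition _ := [Finite of minimal_ideal_group by <:].

Let K_inhabited : exists k, k \in K := set0Pn _ (minimal_ideal_neq0 mul S_gt0).

Let k0 := xchoose K_inhabited.
Let k0K : k0 \in K := xchooseP K_inhabited.

Definition minimal_ideal_one : minimal_ideal_group :=
  MinimalIdealElt (minimal_ideal_mulr (sinv k0) k0K).

Definition minimal_ideal_mul (u v : minimal_ideal_group) : minimal_ideal_group :=
  MinimalIdealElt (minimal_ideal_mulr (val v) (valP u)).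

Definition minimal_ideal_inv (u : minimal_ideal_group) : minimal_ideal_group :=
  MinimalIdealElt (minimal_ideal_sinv (valP u)).

Lemma minimal_ideal_mulgA : associative minimal_ideal_mul.
Proof. by move=> u v w; apply: val_inj; rewrite /= mulA. Qed.

Lemma minimal_ideal_mul1g : left_id minimal_ideal_one minimal_ideal_mul.
Proof.
by move=> u; apply: val_inj; rewrite /= (minimal_ideal_mul_sinv k0K (valP u)) (sinvP _).1.
Qed.

Lemma minimal_ideal_mulVg :
  left_inverse minimal_ideal_one minimal_ideal_inv minimal_ideal_mul.
Proof. by move=> u; apply: val_inj; rewrite /= (minimal_ideal_sinv_mul (valP u) k0K). Qed.

HB.instance Definition _ := Finite_isGroup.Build minimal_ideal_group
  minimal_ideal_mulgA minimal_ideal_mul1g minimal_ideal_mulVg.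

Lemma minimal_ideal_is_group : exists (H : finGroupType) (phi : H -> S),
  [/\ injective phi, forall s, s \in K <-> exists h, phi h = s
    & forall h h', phi (h * h')%g = phi h ** phi h'].
Proof.
exists minimal_ideal_group, val; split=> // [|s]; first exact: val_inj.
by split=> [sK | [u <-]]; [exists (MinimalIdealElt sK) | apply: valP].
Qed.

End InverseSemigroup.

Theorem proposition7p11 (S : finType) (mul : S -> S -> S) :
  associative mul -> 0 < #|S| -> inverse_semigroup mul -> K_thin mul.
Proof.
move=> mulA S_gt0 invS.
have [H [phi [phi_inj phi_onto phiM]]] := minimal_ideal_is_group mulA invS S_gt0.
exists unit, unit, H, (fun _ _ => 1%g), tt, tt; split=> //; first by left; rewrite card_unit.
exists (fun x => phi x.1.2); split.
- by move=> [[[] h] []] [[[] h'] []] /phi_inj /= ->.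
- move=> s; split=> [/phi_onto[h <-] | [x <-]]; first by exists (tt, h, tt).
  by apply/phi_onto; exists x.1.2.
- by move=> [[[] h] []] [[[] h'] []]; rewrite /= mulg1 phiM.
Qed.
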